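(* Let $\mathrm{Pr}_T(x)$ be a provability predicate of $T$ satisfying condition $\mathbf{M}$. Then $\mathsf{MN}\subseteq \mathsf{PL}(\mathrm{Pr}_T)$. Furthermore, $\mathrm{Pr}_T(x)$ satisfies condition $\mathbf{D3}$ if and only if $\mathsf{MNF}\subseteq\mathsf{PL}(\mathrm{Pr}_T)$.
   Context: $T$ is a primitive recursively axiomatized consistent extension of Peano Arithmetic $\mathsf{PA}$ in the language of first-order arithmetic; $\ulcorner\varphi\urcorner$ denotes the numeral of the Gödel number of $\varphi$. A provability predicate of $T$ is a formula $\mathrm{Pr}_T(x)$ such that for every $n\in\omega$, $\mathsf{PA}\vdash\mathrm{Pr}_T(\overline{n})$ iff $n$ is the Gödel number of a theorem of $T$. Condition $\mathbf{M}$: if $T\vdash\varphi\to\psi$ then $T\vdash\mathrm{Pr}_T(\ulcorner\varphi\urcorner)\to\mathrm{Pr}_T(\ulcorner\psi\urcorner)$. Condition $\mathbf{D3}$: $T\vdash\mathrm{Pr}_T(\ulcorner\varphi\urcorner)\to\mathrm{Pr}_T(\ulcorner\mathrm{Pr}_T(\ulcorner\varphi\urcorner)\urcorner)$ for every formula $\varphi$. The modal language has propositional variables, $\bot$, $\to$, $\Box$. An arithmetical interpretation based on $\mathrm{Pr}_T$ is a map $f$ from modal formulas to arithmetic sentences (arbitrary on propositional variables) with $f(\bot)$ being $0=1$, $f(A\to B)=f(A)\to f(B)$, $f(\Box A)=\mathrm{Pr}_T(\ulcorner f(A)\urcorner)$. $\mathsf{PL}(\mathrm{Pr}_T)$ is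 the set of modal formulas $A$ such that $T\vdash f(A)$ for all arithmetical interpretations $f$ based on $\mathrm{Pr}_T$. $\mathsf{MN}$ is the modal logic with all tautologies as axioms and rules modus ponens, necessitation ($A/\Box A$) and RM ($A\to B/\Box A\to\Box B$); $\mathsf{MNF}$ is $\mathsf{MN}$ plus the scheme $\Box A\to\Box\Box A$. *)

From Stdlib Require Import Arith List.
Import ListNotations.

Inductive term : Type :=
| tvar  : nat -> term
| tzero : term
| tsucc : term -> term
| tplus : term -> term -> term
| tmult : term -> term -> term.

Inductive form : Type :=
| fbot : form
| fimp : form -> form -> form
| feq  : term -> term -> form
| fall : form -> form.           (* binds de Bruijn index 0 *)

Fixpoint tsubst (s : nat -> term) (t : term) : term :=
  match t with
  | tvar n => s n
  | tzero => tzero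
  | tsucc u => tsucc (tsubst s u)
  | tplus u v => tplus (tsubst s u) (tsubst s v)
  | tmult u v => tmult (tsubst s u) (tsubst s v)
  end.

Definition tshift (t : term) : term := tsubst (fun k => tvar (S k)) t.

Definition up (s : nat -> term) : nat -> term :=
  fun n => match n with 0 => tvar 0 | S k => tshift (s k) end.

Fixpoint fsubst (s : nat -> term) (phi : form) : form :=
  match phi with
  | fbot => fbot
  | fimp a b => fimp (fsubst s a) (fsubst s b)
  | feq u v => feq (tsubst s u) (tsubst s v)
  | fall a => fall (fsubst (up s) a)
  end.

Definition inst (t : term) (phi : form) : form :=
  fsubst (fun n => match n with 0 => t | S k => tvar k end) phi.

Definition lift (phi : form) : form := fsubst (fun k => tvar (S k)) phi.

Fixpoint tbound (n : nat) (t : term) : Prop :=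
  match t with
  | tvar k => k < n
  | tzero => True
  | tsucc u => tbound n u
  | tplus u v | tmult u v => tbound n u /\ tbound n v
  end.

Fixpoint fbound (n : nat) (phi : form) : Prop :=
  match phi with
  | fbot => True
  | fimp a b => fbound n a /\ fbound n b
  | feq u v => tbound n u /\ tbound n v
  | fall a => fbound (S n) a
  end.

Definition sentence (phi : form) : Prop := fbound 0 phi.

Inductive Prv (Ax : form -> Prop) : form -> Prop :=
| P_ax   : forall phi, Ax phi -> Prv Ax phi
| P_K    : forall a b, Prv Ax (fimp a (fimp b a))
| P_S    : forall a b c,
    Prv Ax (fimp (fimp a (fimp b c)) (fimp (fimp a b) (fimp a c)))
| P_DN   : forall a, Prv Ax (fimp (fimp (fimp a fbot) fbot) a)
| P_inst : forall a t, Prv Ax (fimp (fall a) (inst t a))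
| P_dist : forall a b, Prv Ax (fimp (fall (fimp a b)) (fimp (fall a) (fall b)))
| P_vac  : forall a, Prv Ax (fimp a (fall (lift a)))
| P_refl : forall t, Prv Ax (feq t t)
| P_leib : forall a s t, Prv Ax (fimp (feq s t) (fimp (inst s a) (inst t a)))
| P_mp   : forall a b, Prv Ax (fimp a b) -> Prv Ax a -> Prv Ax b
| P_gen  : forall a, Prv Ax a -> Prv Ax (fall a).

(* ---------- Peano Arithmetic (open axioms, read as universal closures) ---------- *)
Definition v0 := tvar 0.
Definition v1 := tvar 1.

Definition succ_var0 : nat -> term :=
  fun n => match n with 0 => tsucc (tvar 0) | k => tvar k end.

Inductive PA : form -> Prop :=
| PA1 : PA (fimp (feq (tsucc v0) tzero) fbot)
| PA2 : PA (fimp (feq (tsucc v0) (tsucc v1)) (feq v0 v1))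
| PA3 : PA (feq (tplus v0 tzero) v0)
| PA4 : PA (feq (tplus v0 (tsucc v1)) (tsucc (tplus v0 v1)))
| PA5 : PA (feq (tmult v0 tzero) tzero)
| PA6 : PA (feq (tmult v0 (tsucc v1)) (tplus (tmult v0 v1) v0))
| PA7_ind : forall phi,
    PA (fimp (inst tzero phi)
             (fimp (fall (fimp phi (fsubst succ_var0 phi))) (fall phi))).

Definition cpair (m n : nat) : nat := (m + n) * (m + n + 1) / 2 + m.

Fixpoint tcode (t : term) : nat :=
  match t with
  | tvar n => cpair 0 n
  | tzero => cpair 1 0
  | tsucc u => cpair 2 (tcode u)
  | tplus u v => cpair 3 (cpair (tcode u) (tcode v))
  | tmult u v => cpair 4 (cpair (tcode u) (tcode v))
  end.

Fixpoint gn (phi : form) : nat :=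
  match phi with
  | fbot => cpair 0 0
  | fimp a b => cpair 1 (cpair (gn a) (gn b))
  | feq u v => cpair 2 (cpair (tcode u) (tcode v))
  | fall a => cpair 3 (gn a)
  end.

Fixpoint numeral (n : nat) : term :=
  match n with 0 => tzero | S k => tsucc (numeral k) end.

Definition PrAt (Pr : form) (phi : form) : form := inst (numeral (gn phi)) Pr.

Inductive PRF : nat -> (list nat -> nat) -> Prop :=
| pr_zero : forall n, PRF n (fun _ => 0)
| pr_succ : PRF 1 (fun l => S (hd 0 l))
| pr_proj : forall n i, i < n -> PRF n (fun l => nth i l 0)
| pr_comp : forall n g hs, PRF (length hs) g -> Forall (PRF n) hs ->
    PRF n (fun l => g (map (fun h => h l) hs))
| pr_rec : forall n g h, PRF n g -> PRF (S (S n)) h ->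
    PRF (S n) (fun l => nat_rect (fun _ => nat) (g (tl l))
                          (fun k acc => h (k :: acc :: tl l)) (hd 0 l)).

Definition prim_rec1 (f : nat -> nat) : Prop :=
  exists g, PRF 1 g /\ forall n, g [n] = f n.

Definition pr_axiomatized (T : form -> Prop) : Prop :=
  exists chi : nat -> nat, prim_rec1 chi /\
    forall n, chi n <> 0 <-> exists phi, n = gn phi /\ T phi.

Definition consistent (T : form -> Prop) : Prop := ~ Prv T fbot.

Definition extends_PA (T : form -> Prop) : Prop := forall phi, Prv PA phi -> Prv T phi.

(* Pr(x) (free variable x = index 0) is a provability predicate of T *)
Definition prov_pred (T : form -> Prop) (Pr : form) : Prop :=
  fbound 1 Pr /\
  forall n, Prv PA (inst (numeral n) Pr) <-> exists phi, n = gn phi /\ Prv T phi.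

Definition condM (T : form -> Prop) (Pr : form) : Prop :=
  forall phi psi, sentence phi -> sentence psi ->
    Prv T (fimp phi psi) -> Prv T (fimp (PrAt Pr phi) (PrAt Pr psi)).

Definition condD3 (T : form -> Prop) (Pr : form) : Prop :=
  forall phi, sentence phi ->
    Prv T (fimp (PrAt Pr phi) (PrAt Pr (PrAt Pr phi))).

Inductive mform : Type :=
| mvar : nat -> mform
| mbot : mform
| mimp : mform -> mform -> mform
| mbox : mform -> mform.

Fixpoint meval (val : mform -> bool) (A : mform) : bool :=
  match A with
  | mvar _ => val A
  | mbot => false
  | mimp B C => implb (meval val B) (meval val C)
  | mbox _ => val A
  end.

Definition tautology (A : mform) : Prop := forall val, meval val A = true.

Inductive mder (four : bool) : mform -> Prop :=
| md_taut : forall A, tautology A -> mder four A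
| md_mp   : forall A B, mder four (mimp A B) -> mder four A -> mder four B
| md_nec  : forall A, mder four A -> mder four (mbox A)
| md_rm   : forall A B, mder four (mimp A B) -> mder four (mimp (mbox A) (mbox B))
| md_4    : forall A, four = true -> mder four (mimp (mbox A) (mbox (mbox A))).

Definition MN := mder false.
Definition MNF := mder true.

Fixpoint interp (Pr : form) (v : nat -> form) (A : mform) : form :=
  match A with
  | mvar p => v p
  | mbot => feq tzero (tsucc tzero)
  | mimp B C => fimp (interp Pr v B) (interp Pr v C)
  | mbox B => PrAt Pr (interp Pr v B)
  end.

Definition PL (T : form -> Prop) (Pr : form) (A : mform) : Prop :=
  forall v : nat -> form, (forall p, sentence (v p)) -> Prv T (interp Pr v A).

(* Kalmár's argument, with propositional variables and boxed formulas as atoms,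
   shows that the interpretation of every tautology is provable in T.
   Necessitation is then the defining property of a provability predicate
   together with PA ⊆ T, rule RM is condition M, and axiom 4 is D3, all applied
   to interpretations, which are sentences.  Conversely, D3 for φ is the
   instance of axiom 4 at a variable interpreted as φ. *)
From Stdlib Require Import Arith List Lia.
Import ListNotations.

Section Deduction.
Variable Ax : form -> Prop.

Inductive Deriv (G : list form) : form -> Prop :=
| Deriv_hyp : forall f, In f G -> Deriv G f
| Deriv_thm : forall f, Prv Ax f -> Deriv G f
| Deriv_mp : forall a b, Deriv G (fimp a b) -> Deriv G a -> Deriv G b.

Lemma prv_imp_refl a : Prv Ax (fimp a a).
Proof.
  apply (P_mp _ _ _ (P_mp _ _ _ (P_S Ax a (fimp a a) a) (P_K Ax a (fimp a a)))).
  apply P_K.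
Qed.

Lemma Deriv_nil f : Deriv [] f -> Prv Ax f.
Proof.
  induction 1 as [f []| |a b _ IHab _ IHa]; auto.
  exact (P_mp _ _ _ IHab IHa).
Qed.

Lemma Deriv_incl G D f : incl G D -> Deriv G f -> Deriv D f.
Proof.
  intros HGD; induction 1.
  - apply Deriv_hyp; auto.
  - apply Deriv_thm; auto.
  - eapply Deriv_mp; eauto.
Qed.

Lemma Deriv_weaken G a f : Deriv G f -> Deriv (a :: G) f.
Proof. apply Deriv_incl, incl_tl, incl_refl. Qed.

Lemma Deriv_head G a : Deriv (a :: G) a.
Proof. apply Deriv_hyp; left; reflexivity. Qed.

Lemma Deriv_K G a b : Deriv G b -> Deriv G (fimp a b).
Proof. apply Deriv_mp, Deriv_thm, P_K. Qed.

Lemma Deriv_deduction G a b : Deriv (a :: G) b -> Deriv G (fimp a b).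
Proof.
  induction 1 as [f [<-|Hf]|f Hf|c d _ IHcd _ IHc].
  - apply Deriv_thm, prv_imp_refl.
  - apply Deriv_K, Deriv_hyp; auto.
  - apply Deriv_K, Deriv_thm; auto.
  - eapply Deriv_mp; [eapply Deriv_mp; [apply Deriv_thm, P_S|]|]; eauto.
Qed.

Lemma Deriv_exfalso G f : Deriv G fbot -> Deriv G f.
Proof. intros H; eapply Deriv_mp; [apply Deriv_thm, P_DN|apply Deriv_K, H]. Qed.

Lemma Deriv_cases G x f :
  Deriv (x :: G) f -> Deriv (fimp x fbot :: G) f -> Deriv G f.
Proof.
  intros Hpos Hneg.
  eapply Deriv_mp; [apply Deriv_thm, P_DN|]. apply Deriv_deduction.
  eapply Deriv_mp; [apply Deriv_head|].
  eapply Deriv_mp; [apply Deriv_weaken, Deriv_deduction, Hneg|].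
  apply Deriv_deduction.
  eapply Deriv_mp; [apply Deriv_hyp; right; left; reflexivity|].
  eapply Deriv_mp; [apply Deriv_weaken, Deriv_weaken, Deriv_deduction, Hpos|].
  apply Deriv_head.
Qed.

End Deduction.

Definition signed (b : bool) (f : form) : form := if b then f else fimp f fbot.

Fixpoint atoms (A : mform) : list mform :=
  match A with
  | mvar _ | mbox _ => [A]
  | mbot => []
  | mimp B C => atoms B ++ atoms C
  end.

Definition mform_eq_dec (x y : mform) : {x = y} + {x <> y}.
Proof. decide equality; apply Nat.eq_dec. Defined.

Definition update (val : mform -> bool) (X : mform) (b : bool) : mform -> bool :=
  fun Y => if mform_eq_dec Y X then b else val Y.

Section Kalmar.
Variables (T : form -> Prop) (Pr : form) (v : nat -> form).
Hypothesis interp_bot_refutable : Prv T (fimp (interp Pr v mbot) fbot).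

Definition literal (val : mform -> bool) (X : mform) : form :=
  signed (val X) (interp Pr v X).

Lemma Deriv_literal_interp G val A :
  (forall X, In X (atoms A) -> Deriv T G (literal val X)) ->
  Deriv T G (signed (meval val A) (interp Pr v A)).
Proof.
  unfold literal; induction A as [n| |B IHB C IHC|B]; intros Hatoms; simpl.
  - apply (Hatoms (mvar n)); left; reflexivity.
  - apply Deriv_thm, interp_bot_refutable.
  - simpl in Hatoms.
    specialize (IHB (fun X HX => Hatoms X (in_or_app _ _ _ (or_introl HX)))).
    specialize (IHC (fun X HX => Hatoms X (in_or_app _ _ _ (or_intror HX)))).
    destruct (meval val B), (meval val C); simpl in *.
    + apply Deriv_K, IHC.
    + apply Deriv_deduction.
      eapply Deriv_mp; [apply Deriv_weaken, IHC|].
      eapply Deriv_mp; [apply Deriv_head|apply Deriv_weaken, IHB].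
    + apply Deriv_K, IHC.
    + apply Deriv_deduction, Deriv_exfalso.
      eapply Deriv_mp; [apply Deriv_weaken, IHB|apply Deriv_head].
  - apply (Hatoms (mbox B)); left; reflexivity.
Qed.

Lemma incl_literal_update val X b L G :
  incl (literal (update val X b) X :: map (literal (update val X b)) L ++ G)
       (signed b (interp Pr v X) :: map (literal val) L ++ G).
Proof.
  unfold literal, update.
  intros g [<-|Hg]; [destruct (mform_eq_dec X X); [left; reflexivity|congruence]|].
  apply in_app_or in Hg as [Hg|Hg]; [|right; apply in_or_app; right; exact Hg].
  apply in_map_iff in Hg as [Y [<- HY]].
  destruct (mform_eq_dec Y X) as [->|]; [left; reflexivity|].
  right; apply in_or_app; left; apply in_map_iff; exists Y; auto.
Qed.

Lemma Deriv_discharge_literals L : forall G f,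
  (forall val, Deriv T (map (literal val) L ++ G) f) -> Deriv T G f.
Proof.
  induction L as [|X L IHL]; intros G f Hall.
  - exact (Hall (fun _ => true)).
  - apply IHL; intros val.
    assert (Hb : forall b, Deriv T (signed b (interp Pr v X) :: map (literal val) L ++ G) f).
    { intros b. apply (Deriv_incl _ _ _ _ (incl_literal_update val X b L G)).
      exact (Hall (update val X b)). }
    exact (Deriv_cases _ _ _ _ (Hb true) (Hb false)).
Qed.

Lemma tautology_interp_prv A : tautology A -> Prv T (interp Pr v A).
Proof.
  intros Htaut. apply Deriv_nil, (Deriv_discharge_literals (atoms A)); intros val.
  rewrite app_nil_r.
  assert (Hlit := Deriv_literal_interp (map (literal val) (atoms A)) val A).
  rewrite Htaut in Hlit; apply Hlit.
  intros X HX; apply Deriv_hyp, in_map, HX.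
Qed.

End Kalmar.

Lemma tbound_tsubst t : forall n m s, tbound n t ->
  (forall k, k < n -> tbound m (s k)) -> tbound m (tsubst s t).
Proof. induction t; simpl; intros; intuition eauto. Qed.

Lemma fbound_fsubst f : forall n m s, fbound n f ->
  (forall k, k < n -> tbound m (s k)) -> fbound m (fsubst s f).
Proof.
  induction f as [|a IHa b IHb|u w|a IHa]; simpl; intros n m s Hf Hs;
    intuition eauto using tbound_tsubst.
  eapply IHa; eauto. intros [|k] Hk; simpl; [lia|].
  eapply tbound_tsubst; [apply Hs; lia|]. simpl; intros; lia.
Qed.

Lemma numeral_closed n : tbound 0 (numeral n).
Proof. induction n; simpl; auto. Qed.

Lemma PrAt_sentence Pr phi : fbound 1 Pr -> sentence (PrAt Pr phi).
Proof.
  intros HPr. eapply fbound_fsubst; [exact HPr|].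
  intros [|k] Hk; simpl; [apply numeral_closed|lia].
Qed.

Lemma interp_sentence Pr v A : fbound 1 Pr -> (forall p, sentence (v p)) ->
  sentence (interp Pr v A).
Proof.
  intros HPr Hv. induction A; simpl; try apply PrAt_sentence; auto.
  - split; simpl; auto.
  - split; auto.
Qed.

Lemma prv_zero_neq_one T : extends_PA T -> Prv T (fimp (feq tzero (tsucc tzero)) fbot).
Proof.
  intros HPA.
  assert (Hsucc : Prv T (fimp (feq (tsucc tzero) tzero) fbot)).
  { apply HPA. exact (P_mp _ _ _ (P_inst PA _ tzero) (P_gen PA _ (P_ax PA _ PA1))). }
  apply Deriv_nil, Deriv_deduction.
  eapply Deriv_mp; [apply Deriv_thm, Hsucc|].
  eapply Deriv_mp; [eapply Deriv_mp|apply Deriv_thm, (P_refl _ tzero)].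
  - apply Deriv_thm, (P_leib T (feq (tvar 0) tzero) tzero (tsucc tzero)).
  - apply Deriv_head.
Qed.

Lemma mder_PL T Pr four : extends_PA T -> prov_pred T Pr -> condM T Pr ->
  (four = true -> condD3 T Pr) -> forall A, mder four A -> PL T Pr A.
Proof.
  intros HPA [HPr Hprov] HM HD3 A HA.
  induction HA as [A Htaut|A B _ IHAB _ IHA|A _ IHA|A B _ IHAB|A Hfour];
    intros v Hv; simpl.
  - apply tautology_interp_prv; [apply prv_zero_neq_one, HPA|exact Htaut].
  - exact (P_mp _ _ _ (IHAB v Hv) (IHA v Hv)).
  - apply HPA, Hprov. exists (interp Pr v A); split; [reflexivity|exact (IHA v Hv)].
  - apply HM; [apply interp_sentence; auto|apply interp_sentence; auto|exact (IHAB v Hv)].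
  - apply HD3, interp_sentence; auto.
Qed.

Lemma condD3_of_MNF_PL T Pr : (forall A, MNF A -> PL T Pr A) -> condD3 T Pr.
Proof.
  intros HMNF phi Hphi.
  exact (HMNF _ (md_4 _ (mvar 0) eq_refl) (fun _ => phi) (fun _ => Hphi)).
Qed.

Theorem proposition4p1 (T : form -> Prop) (Pr : form) :
  pr_axiomatized T -> consistent T -> extends_PA T ->
  prov_pred T Pr -> condM T Pr ->
  (forall A, MN A -> PL T Pr A) /\
  (condD3 T Pr <-> (forall A, MNF A -> PL T Pr A)).
Proof.
  intros _ _ HPA Hprov HM. split; [|split].
  - apply mder_PL; auto. discriminate.
  - intros HD3. apply mder_PL; auto.
  - apply condD3_of_MNF_PL.
Qed.
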